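(* Let $a,b\in\mathbb R$ be such that $\Gamma_{a,b}:y^2=x^3+ax^2+bx$ (projectively $Y^2Z=X^3+aX^2Z+bXZ^2$) is a non-singular cubic. If $A,\bar A,B$ are three points on $\Gamma_{a,b}$ lying on a straight line, then $A\#A=\bar B$.
   Context: On $\Gamma_{a,b}$ one uses the chord-tangent group law with neutral element the inflection point $\mathcal O=(0:1:0)$; $T=(0:0:1)$ is a point of order 2, and the conjugate of a point $P$ is $\bar P:=T+P$. For points $P,Q$ on the curve, $P\#Q$ is the third intersection point (with multiplicity) of the line $PQ$ with the curve, where for $P=Q$ the line is the tangent at $P$; thus $P\#Q=-(P+Q)$, and $A\#A$ is the second intersection of the tangent at $A$ with the curve. *)

From HB Require Import structures.
From mathcomp Require Import all_boot all_order all_algebra.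
Set Implicit Arguments. Unset Strict Implicit. Unset Printing Implicit Defensive.
Import Order.TTheory GRing.Theory Num.Theory.
Local Open Scope ring_scope.

Section Curve.
Variable R : realFieldType.
Variables a b : R.

(* Points of the projective plane that may lie on the curve:
   [Inf] is (0:1:0), [Aff x y] is (x:y:1). Every point of the curve is of
   one of these forms (Z = 0 forces X = 0 on the curve). *)
Inductive point := Inf | Aff of R & R.

Definition on_curve (P : point) : Prop :=
  match P with
  | Inf => True
  | Aff x y => y ^+ 2 = x ^+ 3 + a * x ^+ 2 + b * x
  end.

(* Non-singularity: no point of the curve where all partial derivatives of
   F = Y^2 Z - X^3 - a X^2 Z - b X Z^2 vanish.  At (0:1:0), dF/dZ = 1 <> 0,
   so only affine points matter; there grad F = 0 iff 2y = 0 and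
   3x^2 + 2ax + b = 0. *)
Definition nonsingular : Prop :=
  forall x y : R, y ^+ 2 = x ^+ 3 + a * x ^+ 2 + b * x ->
    ~ (2 * y = 0 /\ 3 * x ^+ 2 + 2 * a * x + b = 0).

Definition hc (P : point) : R * R * R :=
  match P with Inf => (0, 1, 0) | Aff x y => (x, y, 1) end.

Definition collinear (P Q S : point) : Prop :=
  let: (x1, y1, z1) := hc P in
  let: (x2, y2, z2) := hc Q in
  let: (x3, y3, z3) := hc S in
  x1 * (y2 * z3 - y3 * z2) - y1 * (x2 * z3 - x3 * z2)
    + z1 * (x2 * y3 - x3 * y2) = 0.

(* Third intersection point (with multiplicity) of the line PQ (the tangent
   at P if P = Q) with the curve. *)
Definition third_pt (x1 y1 x2 lam : R) : point :=
  let x3 := lam ^+ 2 - a - x1 - x2 in Aff x3 (y1 + lam * (x3 - x1)).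

Definition sharp (P Q : point) : point :=
  match P, Q with
  | Inf, Inf => Inf
  | Aff x y, Inf | Inf, Aff x y => Aff x (- y)
  | Aff x1 y1, Aff x2 y2 =>
      if x1 != x2 then third_pt x1 y1 x2 ((y2 - y1) / (x2 - x1))
      else if (y1 != y2) || (y1 == 0) then Inf
      else third_pt x1 y1 x1 ((3 * x1 ^+ 2 + 2 * a * x1 + b) / (2 * y1))
  end.

(* Group law with neutral element O = Inf: P + Q = -(P # Q) = (P # Q) # O. *)
Definition add (P Q : point) : point := sharp (sharp P Q) Inf.

Definition Tpt : point := Aff 0 0.

Definition conj (P : point) : point := add Tpt P.

End Curve.

(* In the group law T has order 2, so collinearity of A, bar A, B says
   B = -(A + T + A), whence bar B = T + B = -2A = A # A.  To avoid proving
   associativity of the chord-tangent law, we argue in coordinates instead: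
   B is the third intersection A # bar A of the line (or equal to it by
   hypothesis), and for A = (x, y) with bar A = (b/x, -b y/x^2) the conjugate of
   A # bar A and the tangential point A # A both have abscissa
   ((x^2 - b) / 2y)^2.  Nonsingularity gives b <> 0 and A <> bar A; the points
   O, T, the other 2-torsion points and the case bar A = -A are checked apart. *)

From Pilot Require Import Defs.
From mathcomp Require Import all_boot all_order all_algebra ring.
Set Implicit Arguments. Unset Strict Implicit. Unset Printing Implicit Defensive.
Import Order.TTheory GRing.Theory Num.Theory.
Local Open Scope ring_scope.

Lemma divf_eq_id (R : fieldType) (c x : R) : x != 0 -> (c / x == x) = (c == x ^+ 2).
Proof. by move=> x0; rewrite -(inj_eq (mulIf x0)) divfK // expr2. Qed.

Section Cubic.
Variables (R : realFieldType) (a b : R).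

Local Notation Inf := (Inf R).
Local Notation T := (Tpt R).
Local Notation on_curve := (on_curve a b).
Local Notation sharp := (sharp a b).
Local Notation conj := (conj a b).

Definition curve_poly (x y : R) : R := y ^+ 2 - (x ^+ 3 + a * x ^+ 2 + b * x).

Lemma on_curve_AffE x y : on_curve (Aff x y) <-> curve_poly x y = 0.
Proof. by rewrite /curve_poly; split=> [->|/eqP]; rewrite ?subrr // subr_eq0 => /eqP. Qed.

Lemma on_curve_x0 y : on_curve (Aff 0 y) -> y = 0.
Proof. by rewrite /= !expr0n !mulr0 !addr0 => /eqP; rewrite sqrf_eq0 => /eqP. Qed.

Lemma on_curve_same_x x y1 y2 :
  on_curve (Aff x y1) -> on_curve (Aff x y2) -> y2 = y1 \/ y2 = - y1.
Proof.
move=> /= h1 h2; have : (y2 - y1) * (y2 + y1) = 0.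
  by rewrite -subr_sqr h1 h2 subrr.
by move/eqP; rewrite mulf_eq0 subr_eq0 addr_eq0 => /orP[] /eqP; [left|right].
Qed.

Lemma nonsingular_b_neq0 : nonsingular a b -> b != 0.
Proof.
by move=> ns; apply/eqP=> b0; apply: (ns 0 0); rewrite b0; [ring | split; ring].
Qed.

(* [b = x^2] and [x^2 + a x + b = 0] force [3 x^2 + 2 a x + b = 0]. *)
Lemma nonsingular_two_torsion x : nonsingular a b -> x != 0 ->
  on_curve (Aff x 0) -> b / x != x.
Proof.
move=> ns x0 /= h; rewrite divf_eq_id //; apply/eqP=> bx.
apply: (ns x 0 h); split; first by rewrite mulr0.
have ea : a = - x - x.
  apply: (mulIf (expf_neq0 2 x0)); apply: subr0_eq.
  by rewrite -[RHS](subrr (0 ^+ 2)) {1}h bx; ring.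
by rewrite ea bx; ring.
Qed.

(* With [x3 := lam^2 - a - x1 - x2] chosen to kill the [u^2] term,
   [curve_poly u (y1 + lam (u - x1)) + (u - x1)(u - x2)(u - x3)] is affine in [u],
   hence the interpolation of its values at [x1] and [x2]. *)
Lemma chord_identity x1 y1 x2 lam u :
  (x1 - x2) * (curve_poly u (y1 + lam * (u - x1))
               + (u - x1) * (u - x2) * (u - (lam ^+ 2 - a - x1 - x2)))
  = (u - x2) * curve_poly x1 y1 - (u - x1) * curve_poly x2 (y1 + lam * (x2 - x1)).
Proof. by rewrite /curve_poly; ring. Qed.

Section Chord.
Variables (x1 y1 x2 lam : R).
Hypotheses (x12 : x1 != x2) (on1 : on_curve (Aff x1 y1))
           (on2 : on_curve (Aff x2 (y1 + lam * (x2 - x1)))).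

Lemma chord_roots u : on_curve (Aff u (y1 + lam * (u - x1))) ->
  [\/ u = x1, u = x2 | u = lam ^+ 2 - a - x1 - x2].
Proof.
move: on1 on2 => /on_curve_AffE h1 /on_curve_AffE h2 /on_curve_AffE hu.
have := chord_identity x1 y1 x2 lam u; rewrite h1 h2 hu !mulr0 subrr add0r.
move/eqP; rewrite mulf_eq0 subr_eq0 (negbTE x12) /= !mulf_eq0 !subr_eq0.
by case/orP=> [/orP[]|] /eqP; [constructor 1 | constructor 2 | constructor 3].
Qed.

Lemma on_curve_third_pt : on_curve (third_pt a x1 y1 x2 lam).
Proof.
move: on1 on2 => /on_curve_AffE h1 /on_curve_AffE h2; apply/on_curve_AffE.
have := chord_identity x1 y1 x2 lam (lam ^+ 2 - a - x1 - x2).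
rewrite h1 h2 !mulr0 subrr !subrr !mulr0 addr0 => /eqP.
by rewrite mulf_eq0 subr_eq0 (negbTE x12) => /eqP.
Qed.

End Chord.

Lemma collinear_swap (P Q S : point R) : collinear P Q S -> collinear Q P S.
Proof.
rewrite /collinear; case: (hc P) => [[x1 y1] z1]; case: (hc Q) => [[x2 y2] z2].
case: (hc S) => [[x3 y3] z3] h.
by apply/eqP; rewrite -oppr_eq0 -[X in _ == X]h; apply/eqP; ring.
Qed.

Lemma collinear_Inf_Aff x y u v : collinear Inf (Aff x y) (Aff u v) -> u = x.
Proof. by rewrite /collinear /= => h; apply: subr0_eq; rewrite -[RHS]h; ring. Qed.

Lemma collinear_Aff_Aff_Inf (x1 y1 x2 y2 : R) :
  collinear (Aff x1 y1) (Aff x2 y2) Inf -> x2 = x1.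
Proof. by rewrite /collinear /= => h; apply: subr0_eq; rewrite -[RHS]h; ring. Qed.

Lemma collinear_vertical (x y1 y2 u v : R) : y1 != y2 ->
  collinear (Aff x y1) (Aff x y2) (Aff u v) -> u = x.
Proof.
rewrite /collinear /= => y12 h.
have : (u - x) * (y1 - y2) = 0 by rewrite -[RHS]h; ring.
by move/eqP; rewrite mulf_eq0 !subr_eq0 (negbTE y12) orbF => /eqP.
Qed.

Lemma collinear_chord (x1 y1 x2 y2 u v : R) : x1 != x2 ->
  collinear (Aff x1 y1) (Aff x2 y2) (Aff u v) ->
  v = y1 + (y2 - y1) / (x2 - x1) * (u - x1).
Proof.
rewrite /collinear /= => x12; have x21 : x2 - x1 != 0 by rewrite subr_eq0 eq_sym.
move=> h; apply: (mulfI x21); apply: subr0_eq; rewrite -[RHS]h; field.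
by rewrite x21.
Qed.

Lemma collinear_sharp_chord (x1 y1 x2 y2 u v : R) : x1 != x2 ->
  on_curve (Aff x1 y1) -> on_curve (Aff x2 y2) -> on_curve (Aff u v) ->
  collinear (Aff x1 y1) (Aff x2 y2) (Aff u v) ->
  Aff u v <> Aff x1 y1 -> Aff u v <> Aff x2 y2 ->
  Aff u v = sharp (Aff x1 y1) (Aff x2 y2).
Proof.
move=> x12 on1 on2 onB /(collinear_chord x12) vE; rewrite /= x12.
set lam := (y2 - y1) / (x2 - x1) in vE *.
have y2E : y2 = y1 + lam * (x2 - x1).
  by rewrite /lam divfK ?subr_eq0 1?eq_sym // addrC subrK.
rewrite vE in onB *; rewrite y2E in on2 *.
by case: (chord_roots x12 on1 on2 onB) => ->; rewrite ?subrr ?mulr0 ?addr0.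
Qed.

Lemma collinear_sharp P Q B :
  on_curve P -> on_curve Q -> on_curve B -> P <> Q ->
  collinear P Q B -> B <> P -> B <> Q -> B = sharp P Q.
Proof.
case: P Q B => [|x1 y1] [|x2 y2] [|u v] // onP onQ onB PQ col BP BQ.
- rewrite (collinear_Inf_Aff col) in onB BQ *.
  by case: (on_curve_same_x onQ onB) => vE; rewrite vE in BQ *.
- rewrite (collinear_Inf_Aff (collinear_swap col)) in onB BP *.
  by case: (on_curve_same_x onP onB) => vE; rewrite vE in BP *.
- rewrite (collinear_Aff_Aff_Inf col) /= eqxx /= in PQ *.
  by case: eqP PQ => // ->.
case: (eqVneq x1 x2) => [x12|x12]; last exact: collinear_sharp_chord.
subst x2; have y12 : y1 != y2 by apply/eqP=> y12; apply: PQ; rewrite y12.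
rewrite (collinear_vertical y12 col) in onB BP BQ *.
case: (on_curve_same_x onP onQ) => y2E; first by rewrite y2E eqxx in y12.
by case: (on_curve_same_x onP onB) => vE; rewrite vE -?y2E in BP BQ.
Qed.

Lemma conj_Inf : conj Inf = T.
Proof. by rewrite /conj /Defs.add /Tpt /= !oppr0. Qed.

Lemma conj_T : conj T = Inf.
Proof. by rewrite /conj /Defs.add /Tpt /= eqxx orbT. Qed.

(* The chord through [T] and [(x, y)] meets the curve at the roots [0], [x], [x']
   of [u^3 + (a - (y/x)^2) u^2 + b u], so [x x' = b]. *)
Lemma conj_Aff x y : on_curve (Aff x y) -> x != 0 ->
  conj (Aff x y) = Aff (b / x) (- b * y / x ^+ 2).
Proof.
move=> /= onA x0.
have cE : (y / x) ^+ 2 - a - x = b / x by rewrite expr_div_n onA; field.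
rewrite /conj /Defs.add /Tpt /= eq_sym x0 /third_pt !subr0 cE /=.
by congr Aff; field.
Qed.

Lemma on_curve_conj A : on_curve A -> on_curve (conj A).
Proof.
case: A => [|x y] onA; first by rewrite conj_Inf /Tpt /=; ring.
have [x0|x0] := eqVneq x 0.
  by move: onA; rewrite x0 => /on_curve_x0 ->; rewrite conj_T.
rewrite conj_Aff //=; move: onA => /= onA.
rewrite (_ : (- b * y / x ^+ 2) ^+ 2 = b ^+ 2 / x ^+ 4 * y ^+ 2); last by field.
by rewrite onA; field.
Qed.

Lemma conj_neq A : nonsingular a b -> on_curve A -> conj A <> A.
Proof.
move=> ns; case: A => [|x y] onA; first by rewrite conj_Inf.
have [x0|x0] := eqVneq x 0.
  by move: onA; rewrite x0 => /on_curve_x0 ->; rewrite conj_T.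
rewrite conj_Aff // => -[bx yE].
have y0 : y = 0.
  apply/eqP; rewrite -eqNr; apply/eqP; rewrite -[RHS]yE -(divfK x0 b) bx; field.
  by rewrite x0.
by rewrite y0 in onA; move: (nonsingular_two_torsion ns x0 onA); rewrite bx eqxx.
Qed.

Lemma sharp_dbl x y : y != 0 -> sharp (Aff x y) (Aff x y) =
  third_pt a x y x ((3 * x ^+ 2 + 2 * a * x + b) / (2 * y)).
Proof. by move=> y0; rewrite /= eqxx /= eqxx (negbTE y0). Qed.

Lemma sharp_dbl_two_torsion x : sharp (Aff x 0) (Aff x 0) = Inf.
Proof. by rewrite /= !eqxx. Qed.

Lemma on_curve_aE x y : on_curve (Aff x y) -> x != 0 ->
  a = (y ^+ 2 - x ^+ 3 - b * x) / x ^+ 2.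
Proof. by move=> /= -> x0; field. Qed.

Lemma sharp_dbl_T x y : on_curve (Aff x y) -> x != 0 -> y != 0 -> b / x = x ->
  sharp (Aff x y) (Aff x y) = T.
Proof.
move=> onA x0 y0 /(canRL (divfK x0)); rewrite -expr2 => bE.
rewrite sharp_dbl // /third_pt /Tpt (on_curve_aE onA x0) bE.
by congr Aff; field; rewrite x0 y0.
Qed.

Lemma sharp_conj_two_torsion x : on_curve (Aff x 0) -> x != 0 -> b / x != x ->
  sharp (Aff x 0) (conj (Aff x 0)) = T.
Proof.
move=> onA x0 bx; rewrite conj_Aff // /= eq_sym bx /third_pt /Tpt.
rewrite (on_curve_aE onA x0).
by congr Aff; field; rewrite x0 mulNr -expr2 subr_eq0 -divf_eq_id // bx.
Qed.

Lemma conj_sharp_conj x y : on_curve (Aff x y) -> x != 0 -> y != 0 -> b != 0 ->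
  b / x != x -> conj (sharp (Aff x y) (conj (Aff x y))) = sharp (Aff x y) (Aff x y).
Proof.
move=> onA x0 y0 b0 bx.
have cx : b / x - x != 0 by rewrite subr_eq0.
have xb : x ^+ 2 - b != 0 by rewrite subr_eq0 eq_sym -divf_eq_id.
(* the form in which [field] asks for [b / x - x != 0] *)
have xb' : b + - x * x != 0 by rewrite mulNr -expr2 subr_eq0 -divf_eq_id.
have onAc := on_curve_conj onA; rewrite conj_Aff // in onAc *.
rewrite sharp_dbl // /= eq_sym bx.
set lam := (- b * y / x ^+ 2 - y) / (b / x - x).
have dE : - b * y / x ^+ 2 = y + lam * (b / x - x).
  by rewrite /lam divfK // addrC subrK.
have xc : x != b / x by rewrite eq_sym.
rewrite dE in onAc; have onB := on_curve_third_pt xc onA onAc.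
(* [A # bar A] has abscissa [b (2 y / (x^2 - b))^2], so its conjugate has
   abscissa [((x^2 - b) / 2 y)^2], the abscissa of [2 A]. *)
have uE : lam ^+ 2 - a - x - b / x = 4 * b * y ^+ 2 / (x ^+ 2 - b) ^+ 2.
  by rewrite /lam (on_curve_aE onA x0); field; rewrite ?(x0, xb, xb').
have u0 : 4 * b * y ^+ 2 / (x ^+ 2 - b) ^+ 2 != 0.
  by rewrite !mulf_neq0 ?invr_eq0 ?expf_neq0 ?pnatr_eq0.
rewrite /third_pt in onB *; cbv zeta in onB |- *.
rewrite uE in onB *; rewrite conj_Aff //.
by rewrite /lam (on_curve_aE onA x0); congr Aff; field; rewrite ?(x0, y0, b0, xb, xb').
Qed.

Lemma sharp_dbl_conj A : nonsingular a b -> on_curve A ->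
  sharp A A = conj (sharp A (conj A)).
Proof.
move=> ns; case: A => [|x y] onA; first by rewrite conj_Inf /Tpt /= oppr0 conj_T.
have [x0|x0] := eqVneq x 0.
  move: onA; rewrite x0 => /on_curve_x0 ->.
  by rewrite sharp_dbl_two_torsion conj_T /= oppr0 conj_T.
have [bx|bx] := eqVneq (b / x) x.
  have y0 : y != 0.
    apply/eqP=> y0; rewrite y0 in onA.
    by have := nonsingular_two_torsion ns x0 onA; rewrite bx eqxx.
  rewrite sharp_dbl_T // conj_Aff //.
  have -> : - b * y / x ^+ 2 = - y by rewrite -(divfK x0 b) bx; field.
  by rewrite bx /= eqxx /= eq_sym eqNr y0 conj_Inf.
have [y0|y0] := eqVneq y 0.
  rewrite y0 in onA *.
  by rewrite sharp_conj_two_torsion // conj_T sharp_dbl_two_torsion.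
by rewrite conj_sharp_conj // nonsingular_b_neq0.
Qed.

End Cubic.

Theorem fact7 (R : realFieldType) (a b : R) (A B : point R) :
  nonsingular a b -> on_curve a b A -> on_curve a b B ->
  ((collinear A (conj a b A) B /\ B <> A /\ B <> conj a b A)
   \/ B = sharp a b A (conj a b A)) ->
  sharp a b A A = conj a b B.
Proof.
move=> ns onA onB hline.
have -> : B = sharp a b A (conj a b A).
  case: hline => [[col [BA BAc]]|-> //].
  have AAc : A <> conj a b A by move/esym; apply: conj_neq ns onA.
  exact: (collinear_sharp onA (on_curve_conj onA) onB AAc col BA BAc).
exact: sharp_dbl_conj.
Qed.
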